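(* Let $P$ be a priority forest on $[n]_0$ with $m$ edges, and let $I_P=[\hat0,P]$ be its principal ideal in $\Pi(n)$. Then $$\chi(I_P,q)=q^{m-\mathrm{sasc}(P)}(q-1)^{\mathrm{sasc}(P)}=q^{m-\mathrm{lucky}(\pi)}(q-1)^{\mathrm{lucky}(\pi)},$$ where $\pi$ is any $(m,n)$-parking function whose priority forest is $P$.
   Context: $[n]_0=\{0,\dots,n\}$, $[n]=\{1,\dots,n\}$. A priority forest on $[n]_0$ is a rooted forest with vertex set $[n]_0$ whose component trees $T_0,T_1,\dots$ are increasing (each non-root vertex has a larger label than its parent) and satisfy: for $j<k$ every label of $T_j$ is smaller than every label of $T_k$. $\Pi(n)$ is the poset of priority forests on $[n]_0$ ordered by inclusion of edge sets, together with an extra top element $\hat1$; $\hat0$ is the edgeless forest; the rank of a priority forest is its number of edges. For the interval $I_P=[\hat0,P]$ with $\rho(x)=|E(x)|$, its characteristic polynomial is $\chi(I_P,q)=\sum_{x\in I_P}\mu(\hat0,x)\,q^{\rho(P)-\rho(x)}$, where $\mu$ is the Möbius function. A small ascent of $P$ is a non-root vertex $i$ whose parent is $i-1$; $\mathrm{sasc}(P)$ is their number. An $(m,n)$-parking function is a map $\pi:[m]\to[n]$ such that when cars $1,\dots,m$ arrive in order to spots $1,\dots,n$ and car $i$ parks in the first empty spot $\ge\pi(i)$, all cars park. Its bird's eye permutation $\omega_\pi$ is the partial map sending each occupied spot to the car parked there. Its priority forest is the forest on $[n]_0$ in which an occupied spot $i$ is a non-root vertex with parent $\pi(\omega_\pi(i))-1$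 and an empty spot (and $0$) is a root; this is a priority forest with $m$ edges. A car is lucky if it parks at its preferred spot $\pi(i)$; $\mathrm{lucky}(\pi)$ is the number of lucky cars. *)

From HB Require Import structures.
From mathcomp Require Import all_boot all_order all_algebra.
Set Implicit Arguments. Unset Strict Implicit. Unset Printing Implicit Defensive.
Import GRing.Theory.

(* A (rooted) forest on the vertex set [n]_0 = {0,...,n} (= 'I_n.+1) is encoded
   by its parent map: [F i = Some j] means j is the parent of i (edge j--i),
   [F i = None] means i is a root. *)
Definition forest (n : nat) := {ffun 'I_n.+1 -> option 'I_n.+1}.

Section Forests.
Variable n : nat.
Implicit Types F G : forest n.

Definition root_step F (i : 'I_n.+1) : 'I_n.+1 :=
  if F i is Some j then j else i.
(* the root of the component tree containing i (depth is at most n in an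
   increasing forest on n+1 vertices) *)
Definition root_of F (i : 'I_n.+1) : 'I_n.+1 := iter n (root_step F) i.

(* priority forest: every component tree is increasing (parent label < child
   label), and the trees are "separated": the tree with the smaller root
   (= its minimum label) has all labels smaller than all labels of the other. *)
Definition priority_forest F : bool :=
  [forall i, forall j, (F i == Some j) ==> (j < i)] &&
  [forall i, forall k, (root_of F i < root_of F k) ==> (i < k)].

Definition rank F : nat := #|[pred i | F i != None]|.

Definition le_forest F G : bool :=
  [forall i, (F i != None) ==> (F i == G i)].

Definition forest0 : forest n := [ffun _ => None].

(* Fuel k >= rank x is used to make
   the recursion structural (strictly smaller forests have smaller rank). *)
Fixpoint mob_fuel (k : nat) (x : forest n) : int :=
  if x == forest0 then 1%R else
  match k with
  | 0 => 0%R
  | k'.+1 => (- \sum_(y : forest n | priority_forest y && le_forest y x && (y != x))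
                 mob_fuel k' y)%R
  end.
Definition mobius0 (x : forest n) : int := mob_fuel (rank x) x.

Definition char_poly_ideal (P : forest n) : {poly int} :=
  (\sum_(x : forest n | priority_forest x && le_forest x P)
      (mobius0 x)%:P * 'X^(rank P - rank x))%R.

Definition sasc (P : forest n) : nat :=
  #|[pred i : 'I_n.+1 | if P i is Some j then j.+1 == i else false]|.
End Forests.

(* A map pi : [m] -> [n] is given as the sequence [:: pi 1; ...; pi m]. *)

(* first empty spot >= p among spots p..n, given the occupied spots s;
   n.+1 signals failure *)
Definition first_free (n : nat) (s : seq nat) (p : nat) : nat :=
  nth n.+1 [seq x <- iota p (n.+1 - p) | x \notin s] 0.
Definition park_step (n : nat) (s : seq nat) (p : nat) : seq nat :=
  rcons s (first_free n s p).
(* i-th entry = spot where car i+1 parks *)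
Definition park_spots (n : nat) (pi : seq nat) : seq nat :=
  foldl (park_step n) [::] pi.

Definition parking_function (m n : nat) (pi : seq nat) : bool :=
  [&& size pi == m, all (fun p => 0 < p <= n) pi &
      all (fun x => x <= n) (park_spots n pi)].

Definition lucky (n : nat) (pi : seq nat) : nat :=
  \sum_(i < size pi) (nth 0 (park_spots n pi) i == nth 0 pi i).

(* priority forest of pi: occupied spot v (car omega(v) = index v spots)
   has parent pi(omega(v)) - 1; empty spots and 0 are roots *)
Definition pf_forest (n : nat) (pi : seq nat) : forest n :=
  [ffun v : 'I_n.+1 =>
     if (v : nat) \in park_spots n pi
     then Some (inord (nth 0 pi (index (v : nat) (park_spots n pi))).-1)
     else None].

From HB Require Import structures.
From mathcomp Require Import all_boot all_order all_algebra.
From mathcomp Require Import zify.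
Import GRing.Theory.
Set Implicit Arguments. Unset Strict Implicit.

(* Call a forest small if each of its edges joins some i - 1 to i.  On priority
   forests, mu(0, x) = (-1)^(rank x) if x is small and mu(0, x) = 0 otherwise.
   Indeed, the small forests below x are the restrictions of x to the subsets T
   of its set A of small ascents, so the recursion for mu reduces to the
   vanishing of the sum of (-1)^|T| over all T included in A; this holds since A
   is nonempty: the least non-root vertex of a priority forest x <> 0 is a small
   ascent.  Hence chi(I_P, q) is the sum of (-1)^|T| q^(m - |T|) over the
   subsets T of the small ascents of P, that is q^(m - sasc P) (q - 1)^(sasc P).
   Finally, the car parked in spot v is lucky exactly when the parent of v in
   the priority forest of pi is v - 1, so lucky(pi) = sasc(P). *)

Section SubsetSums.
Variable I : finType.
Implicit Type S : {set I}.
Local Open Scope ring_scope.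

Lemma sum_subset_card (R : nmodType) S (f : nat -> R) :
  \sum_(T : {set I} | T \subset S) f #|T| = \sum_(k < #|S|.+1) f k *+ 'C(#|S|, k).
Proof.
rewrite (partition_big (fun T : {set I} => inord #|T| : 'I_#|S|.+1) xpredT) //=.
apply: eq_bigr => k _.
rewrite (eq_bigl (fun T => T \in [set T : {set I} | T \subset S & #|T| == k])); last first.
  move=> T; rewrite !inE; case sTS: (T \subset S) => //=.
  by rewrite -val_eqE /= inordK // ltnS subset_leq_card.
rewrite (eq_bigr (fun=> f k)); last first.
  by move=> T; rewrite !inE => /andP[_ /eqP ->].
by rewrite sumr_const cards_draws.
Qed.

Lemma sum_subset_sign (R : comPzRingType) S (a : R) :
  \sum_(T : {set I} | T \subset S) (-1) ^+ #|T| * a ^+ (#|S| - #|T|) =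
  (a - 1) ^+ #|S|.
Proof.
rewrite (sum_subset_card S (fun k => (-1) ^+ k * a ^+ (#|S| - k))) exprBn.
by apply: eq_bigr => k _; rewrite expr1n mulr1.
Qed.
End SubsetSums.

Section SmallForests.
Variable n : nat.
Implicit Types F x y : forest n.

Definition small_forest F : bool :=
  [forall i, if F i is Some j then j.+1 == i else true].

Definition sasc_set F : {set 'I_n.+1} :=
  [set i | if F i is Some j then j.+1 == i else false].

Definition edges F : {set 'I_n.+1} := [set i | F i != None].

Definition restrict F (T : {set 'I_n.+1}) : forest n :=
  [ffun i => if i \in T then F i else None].

Lemma sasc_card F : sasc F = #|sasc_set F|.
Proof. by apply: eq_card => i; rewrite !inE. Qed.

Lemma rank_card F : rank F = #|edges F|.
Proof. by apply: eq_card => i; rewrite !inE. Qed.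

Lemma sasc_le_rank F : sasc F <= rank F.
Proof.
rewrite sasc_card rank_card; apply/subset_leq_card/subsetP => i.
by rewrite !inE; case: (F i).
Qed.

Lemma rank_forest0 : rank (forest0 n) = 0.
Proof. by apply: eq_card0 => i; rewrite !inE ffunE. Qed.

Lemma rank_eq0 F : (rank F == 0) = (F == forest0 n).
Proof.
apply/eqP/eqP => [/card0_eq F0 | ->]; last exact: rank_forest0.
by apply/ffunP => i; rewrite ffunE; apply/eqP; move: (F0 i); rewrite inE => /negbFE.
Qed.

Lemma small_forest0 : small_forest (forest0 n).
Proof. by apply/forallP => i; rewrite ffunE. Qed.

Lemma le_forest_refl F : le_forest F F.
Proof. by apply/forallP => i; rewrite eqxx implybT. Qed.

Lemma le_forest_rank_lt x y : le_forest y x -> y != x -> rank y < rank x.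
Proof.
move=> /forallP yx y_neq_x; rewrite !rank_card; apply: proper_card.
rewrite properE; apply/andP; split.
  by apply/subsetP => i; rewrite !inE => yi; move: (yx i); rewrite yi => /eqP <-.
have [i yxi] : exists i, y i != x i.
  apply/existsP; apply: contraR y_neq_x => /existsPn yx_eq.
  by apply/eqP/ffunP => i; apply/eqP; rewrite -[_ == _]negbK yx_eq.
apply/subsetPn; exists i; rewrite !inE.
  by move: (yx i) yxi; case: (x i) => //; case: (y i).
by move: (yx i) yxi; case: (y i) => //= a /eqP ->; rewrite eqxx.
Qed.

Lemma root_of_root F v : F v = None -> root_of F v = v.
Proof. by move=> Fv; rewrite /root_of iter_fix // /root_step Fv. Qed.

Lemma root_of_parent_root F i j : F i = Some j -> F j = None -> root_of F i = j.
Proof.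
case: n F i j => [|n'] F i j Fi Fj.
  by move: Fi; rewrite (ord1 i) -(ord1 j) Fj.
by rewrite /root_of iterSr /root_step Fi iter_fix // /root_step Fj.
Qed.

Lemma small_forest_priority F : small_forest F -> priority_forest F.
Proof.
move=> /forallP smallF; apply/andP; split.
  apply/forallP => i; apply/forallP => j; apply/implyP => /eqP Fi.
  by move: (smallF i); rewrite Fi => /eqP <-.
have step_mono (v w : 'I_n.+1) : v <= w -> root_step F v <= root_step F w.
  move: (smallF v) (smallF w); rewrite /root_step.
  case Fv: (F v) => [a|]; case Fw: (F w) => [b|] //=.
  - by move=> /eqP av /eqP bw vw; lia.
  - by move=> /eqP av _ vw; lia.
  - move=> _ /eqP bw vw; have [vw_eq|] := eqVneq v w; last by rewrite -val_eqE /=; lia.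
    by rewrite vw_eq Fw in Fv.
have iter_mono t (v w : 'I_n.+1) : v <= w -> iter t (root_step F) v <= iter t (root_step F) w.
  by elim: t => //= t IH vw; exact/step_mono/IH.
apply/forallP => i; apply/forallP => k; apply/implyP.
by apply: contraTT; rewrite -!leqNgt; exact: iter_mono.
Qed.

Lemma priority_forest_sasc_set0 F :
  priority_forest F -> F != forest0 n -> sasc_set F != set0.
Proof.
case/andP => /forallP increasing /forallP separated F_neq0.
have [i0 Fi0] : exists i0, F i0 != None.
  apply/existsP; apply: contraR F_neq0 => /existsPn F0; apply/eqP/ffunP => i.
  by rewrite ffunE; apply/eqP; move: (F0 i); rewrite negbK.
(* Let i be the least non-root and j its parent.  If j.+1 < i, then j and j.+1
   are roots, and the tree of root j contains i > j.+1, against separation. *)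
case: (@arg_minnP _ i0 (fun i => F i != None) val Fi0) => i Fi min_i.
case Fi_eq: (F i) Fi => [j|] // _; apply/set0Pn; exists i; rewrite inE Fi_eq.
have ji : j < i by move: (increasing i) => /forallP/(_ j)/implyP; apply; rewrite Fi_eq.
have [//|j1_neq_i] := eqVneq (j.+1 : nat) i.
have j1_lt_i : j.+1 < i by lia.
pose v : 'I_n.+1 := inord j.+1.
have vE : v = j.+1 :> nat by rewrite inordK //; have := ltn_ord i; lia.
have root_min (u : 'I_n.+1) : u < i -> F u = None.
  by case Fu: (F u) => [a|] // ui; have := min_i u; rewrite Fu => /(_ isT) /=; lia.
have /forallP/(_ v)/implyP := separated i.
rewrite (root_of_parent_root Fi_eq (root_min _ ji)) root_of_root ?root_min ?vE //.
by move=> /(_ (ltnSn _)); lia.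
Qed.

Lemma restrict_le F T : le_forest (restrict F T) F.
Proof. by apply/forallP => i; rewrite ffunE; case: ifP => _; rewrite ?eqxx ?implybT. Qed.

Section RestrictSmallAscents.
Variables (x : forest n) (T : {set 'I_n.+1}).
Hypothesis T_sasc : T \subset sasc_set x.

Lemma restrict_small : small_forest (restrict x T).
Proof.
apply/forallP => i; rewrite ffunE.
by case: ifP => // /(subsetP T_sasc); rewrite inE; case: (x i).
Qed.

Lemma edges_restrict : edges (restrict x T) = T.
Proof.
apply/setP => i; rewrite !inE ffunE.
by case: ifP => // /(subsetP T_sasc); rewrite inE; case: (x i).
Qed.

Lemma rank_restrict : rank (restrict x T) = #|T|.
Proof. by rewrite rank_card edges_restrict. Qed.
End RestrictSmallAscents.

Lemma le_forest_restrict_edges x y : le_forest y x -> restrict x (edges y) = y.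
Proof.
move=> /forallP yx; apply/ffunP => i; rewrite !ffunE inE.
by move: (yx i); case: (y i) => //= a /eqP <-.
Qed.

Lemma sum_small_le (R : nmodType) x (G : forest n -> R) :
  (\sum_(y | small_forest y && le_forest y x) G y =
   \sum_(T : {set 'I_n.+1} | T \subset sasc_set x) G (restrict x T))%R.
Proof.
rewrite (reindex_onto (restrict x) edges) => [|y /andP[_]]; last first.
  exact: le_forest_restrict_edges.
apply: eq_bigl => T; apply/idP/idP => [|T_sasc]; last first.
  by rewrite restrict_small ?restrict_le ?edges_restrict ?eqxx.
case/andP=> /andP[/forallP small_xT _] /eqP edges_xT.
apply/subsetP => i; rewrite -{1}edges_xT !inE; move: (small_xT i).
by rewrite !ffunE; case: ifP => // _; case: (x i).
Qed.
End SmallForests.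

Section Mobius.
Variable n : nat.
Implicit Types x y P : forest n.
Local Open Scope ring_scope.

Lemma sum_priority_small (R : nmodType) x (G : forest n -> R) :
  \sum_(y | priority_forest y && le_forest y x) (if small_forest y then G y else 0) =
  \sum_(y | small_forest y && le_forest y x) G y.
Proof.
rewrite -big_mkcondr; apply: eq_bigl => y.
case small_y: (small_forest y); last by rewrite !andbF.
by rewrite small_forest_priority // andbT.
Qed.

Lemma sum_small_le_sign x : priority_forest x -> x != forest0 n ->
  \sum_(y | small_forest y && le_forest y x) (-1) ^+ rank y = 0 :> int.
Proof.
move=> px x_neq0; rewrite sum_small_le.
have sasc_gt0 : (0 < #|sasc_set x|)%N by rewrite card_gt0 priority_forest_sasc_set0.
have -> : 0 = (1 - 1) ^+ #|sasc_set x| :> int by rewrite subrr expr0n gtn_eqF.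
rewrite -sum_subset_sign.
by apply: eq_bigr => T T_sasc; rewrite rank_restrict // expr1n mulr1.
Qed.

Lemma mob_fuel_forest0 k : mob_fuel k (forest0 n) = 1.
Proof. by case: k => [|k] /=; rewrite eqxx. Qed.

Lemma mob_fuel_priority k x : priority_forest x -> (rank x <= k)%N ->
  mob_fuel k x = if small_forest x then (-1) ^+ rank x else 0.
Proof.
elim: k x => [|k IH] x px rank_x;
  have [->|x_neq0] := eqVneq x (forest0 n);
  rewrite ?mob_fuel_forest0 ?small_forest0 ?rank_forest0 //.
  by move: rank_x; rewrite leqn0 rank_eq0 (negbTE x_neq0).
rewrite /= (negbTE x_neq0).
under eq_bigr => y /andP[/andP[py le_yx] y_neq_x].
  rewrite IH //; first over.
  by have := le_forest_rank_lt le_yx y_neq_x; lia.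
have := sum_small_le_sign px x_neq0.
rewrite -sum_priority_small (bigD1 x) /= ?px ?le_forest_refl // => /eqP.
by rewrite addr_eq0 => /eqP ->.
Qed.

Lemma mobius0_priority x : priority_forest x ->
  mobius0 x = if small_forest x then (-1) ^+ rank x else 0.
Proof. by move=> px; apply: mob_fuel_priority. Qed.

Lemma char_poly_idealE P :
  char_poly_ideal P = 'X^(rank P - sasc P) * ('X - 1) ^+ sasc P.
Proof.
rewrite /char_poly_ideal.
rewrite (eq_bigr (fun x => if small_forest x then (-1) ^+ rank x * 'X^(rank P - rank x) else 0)).
  rewrite sum_priority_small sum_small_le sasc_card -sum_subset_sign mulr_sumr.
  apply: eq_bigr => T T_sasc; rewrite rank_restrict // mulrCA -exprD.
  have := subset_leq_card T_sasc; have := sasc_le_rank P; rewrite sasc_card.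
  by move=> ? ?; congr (_ * 'X^_); lia.
move=> x /andP[px _]; rewrite mobius0_priority //.
by case: (small_forest x); rewrite ?rmorphXn ?rmorphN1 ?mul0r.
Qed.
End Mobius.

Lemma park_spots_rcons n pi p :
  park_spots n (rcons pi p) = rcons (park_spots n pi) (first_free n (park_spots n pi) p).
Proof. by rewrite /park_spots foldl_rcons. Qed.

Lemma size_park_spots n pi : size (park_spots n pi) = size pi.
Proof. by elim/last_ind: pi => [|pi p IH] //; rewrite park_spots_rcons !size_rcons IH. Qed.

Lemma first_free_notin n s p : first_free n s p <= n -> first_free n s p \notin s.
Proof.
rewrite /first_free.
case free: [seq x <- iota p (n.+1 - p) | x \notin s] => [|a l] /=; first by rewrite ltnn.
by move=> _; have := mem_head a l; rewrite -free mem_filter => /andP[].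
Qed.

Lemma uniq_park_spots n pi :
  all (fun x => x <= n) (park_spots n pi) -> uniq (park_spots n pi).
Proof.
elim/last_ind: pi => [|pi p IH] //.
rewrite park_spots_rcons all_rcons rcons_uniq => /andP[spot_le spots_le].
by rewrite first_free_notin // IH.
Qed.

Lemma card_ord_mem_seq N (s : seq nat) (P : pred nat) :
  uniq s -> all (fun x => x < N) s ->
  #|[pred v : 'I_N | ((v : nat) \in s) && P v]| = count P s.
Proof.
move=> s_uniq /allP s_lt.
rewrite cardE size_filter -enumT (eq_count (a2 := preim val (predI P (mem s)))); last first.
  by move=> v; rewrite /= andbC.
rewrite -count_map val_enum_ord -count_filter.
apply/permP/uniq_perm; rewrite ?filter_uniq ?iota_uniq // => v.
by rewrite mem_filter mem_iota /=; case: (boolP (v \in s)) => // /s_lt.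
Qed.

Lemma sasc_pf_forest n pi : all (fun p => 0 < p <= n) pi ->
  sasc (pf_forest n pi) =
  #|[pred v : 'I_n.+1 | ((v : nat) \in park_spots n pi) &&
                        (nth 0 pi (index (v : nat) (park_spots n pi)) == v)]|.
Proof.
move=> /allP pi_range; apply: eq_card => v; rewrite !inE ffunE.
case: ifP => // v_parked /=.
have /pi_range/andP[car_gt0 car_le] : nth 0 pi (index (v : nat) (park_spots n pi)) \in pi.
  by apply: mem_nth; rewrite -(size_park_spots n) index_mem.
by rewrite inordK ?prednK //; lia.
Qed.

Lemma lucky_count n pi : uniq (park_spots n pi) ->
  lucky n pi = count (fun v => nth 0 pi (index v (park_spots n pi)) == v) (park_spots n pi).
Proof.
move=> spots_uniq; set s := park_spots n pi.
rewrite -sum1_count (big_nth 0) big_mkcond big_mkord /lucky -(size_park_spots n) -/s.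
by apply: eq_bigr => i _; rewrite index_uniq // eq_sym; case: (_ == _).
Qed.

Lemma lucky_sasc m n pi : parking_function m n pi -> lucky n pi = sasc (pf_forest n pi).
Proof.
case/and3P => _ pi_range spots_le.
have spots_uniq := uniq_park_spots spots_le.
rewrite lucky_count // sasc_pf_forest //.
by rewrite (card_ord_mem_seq (fun v => nth 0 pi (index v (park_spots n pi)) == v)).
Qed.

Unset Implicit Arguments.

Theorem theorem5p15 (n m : nat) (P : forest n) :
  priority_forest P -> rank P = m ->
  char_poly_ideal P = ('X^(m - sasc P) * ('X - 1) ^+ sasc P)%R /\
  (forall pi : seq nat, parking_function m n pi -> pf_forest n pi = P ->
     char_poly_ideal P = ('X^(m - lucky n pi) * ('X - 1) ^+ lucky n pi)%R).
Proof.
move=> _ <-; split=> [|pi pf <-]; first exact: char_poly_idealE.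
by rewrite (lucky_sasc pf) char_poly_idealE.
Qed.
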